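(* Let $G$ be a group, $C$ a subgroup of $G$, and $\tau\colon G\to(2\mathbb{Z}+1)\cup\{0\}$ an ordering quasi-morphism with kernel $C$. Then $P=\{(g,n)\in G\times\mathbb{Z}:\tau(g)+2n>0\}$ is a positive cone relative to $C\times\{0\}$ for $G\times\mathbb{Z}$.
   Context: An ordering quasi-morphism is a function $\tau\colon G\to\mathbb{Z}$ such that (i) $C=\{g:\tau(g)=0\}$ is a subgroup of $G$ (called the kernel), (ii) $\tau(g^{-1})=-\tau(g)$ for all $g$, (iii) $\tau(g)+\tau(h)+\tau((gh)^{-1})\le1$ for all $g,h\in G$. For a group $H$ and subgroup $K$, a positive cone relative to $K$ is a subsemigroup $P\subseteq H$ with $H=P\sqcup K\sqcup P^{-1}$ (disjoint union). *)

From Stdlib Require Import ZArith.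
Open Scope Z_scope.

Definition is_group {G : Type} (mul : G -> G -> G) (one : G) (inv : G -> G) : Prop :=
  (forall x y z, mul (mul x y) z = mul x (mul y z)) /\
  (forall x, mul one x = x) /\ (forall x, mul x one = x) /\
  (forall x, mul (inv x) x = one) /\ (forall x, mul x (inv x) = one).

Definition is_subgroup {G : Type} (mul : G -> G -> G) (one : G) (inv : G -> G)
  (C : G -> Prop) : Prop :=
  C one /\ (forall x y, C x -> C y -> C (mul x y)) /\ (forall x, C x -> C (inv x)).

Definition ordering_quasi_morphism {G : Type} (mul : G -> G -> G) (one : G)
  (inv : G -> G) (tau : G -> Z) : Prop :=
  is_subgroup mul one inv (fun g => tau g = 0) /\
  (forall g, tau (inv g) = - tau g) /\
  (forall g h, tau g + tau h + tau (inv (mul g h)) <= 1).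

Definition qm_kernel {G : Type} (tau : G -> Z) (C : G -> Prop) : Prop :=
  forall g, C g <-> tau g = 0.

Definition positive_cone_rel {H : Type} (mul : H -> H -> H) (inv : H -> H)
  (P K : H -> Prop) : Prop :=
  (forall x y, P x -> P y -> P (mul x y)) /\
  (forall x, P x \/ K x \/ P (inv x)) /\
  (forall x, ~ (P x /\ K x)) /\
  (forall x, ~ (P x /\ P (inv x))) /\
  (forall x, ~ (K x /\ P (inv x))).

Definition prodZ_mul {G : Type} (mul : G -> G -> G) (x y : G * Z) : G * Z :=
  (mul (fst x) (fst y), snd x + snd y).
Definition prodZ_inv {G : Type} (inv : G -> G) (x : G * Z) : G * Z :=
  (inv (fst x), - snd x).

(** The map [sigma (g, n) = tau g + 2 n] inherits from [tau] antisymmetry under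
    inversion and the defect bound [sigma (x y) >= sigma x + sigma y - 1], so its
    positive set is closed under products and [G * Z] splits into its positive,
    zero and negative sets.  Since [tau] only takes odd values or [0],
    [sigma (g, n) = 0] forces [tau g = 0 = n], i.e. the zero set is [C * {0}]. *)

From Stdlib Require Import ZArith Lia.
Open Scope Z_scope.

Section ConeOfQuasiMorphism.

Variables (H : Type) (mul : H -> H -> H) (inv : H -> H) (K : H -> Prop).
Variable sigma : H -> Z.
Hypothesis sigma_inv : forall x, sigma (inv x) = - sigma x.
Hypothesis sigma_mul_ge : forall x y, sigma x + sigma y - 1 <= sigma (mul x y).
Hypothesis kernel_sigma : forall x, K x <-> sigma x = 0.

Lemma positive_cone_of_quasi_morphism :
  positive_cone_rel mul inv (fun x => sigma x > 0) K.
Proof.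
  repeat split.
  - intros x y Hx Hy; pose proof (sigma_mul_ge x y); lia.
  - intros x; rewrite sigma_inv, kernel_sigma; lia.
  - intros x [Hx HK%kernel_sigma]; lia.
  - intros x; rewrite sigma_inv; lia.
  - intros x [HK%kernel_sigma Hx]; rewrite sigma_inv in Hx; lia.
Qed.

End ConeOfQuasiMorphism.

Lemma ordering_quasi_morphism_mul_ge {G : Type} {mul : G -> G -> G} {one : G}
  {inv : G -> G} {tau : G -> Z} :
  ordering_quasi_morphism mul one inv tau ->
  forall g h, tau g + tau h - 1 <= tau (mul g h).
Proof.
  intros [_ [tau_inv tau_defect]] g h.
  pose proof (tau_defect g h) as Hgh; rewrite tau_inv in Hgh; lia.
Qed.

Lemma odd_or_zero_add_double_eq0 (t n : Z) :
  t = 0 \/ Z.odd t = true -> t + 2 * n = 0 -> t = 0 /\ n = 0.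
Proof.
  intros [Ht | Ht] Hsum; [lia |].
  assert (Heven : t = 2 * - n) by lia.
  rewrite Heven, Z.odd_mul in Ht; discriminate.
Qed.

Theorem proposition5p11 (G : Type) (mul : G -> G -> G) (one : G) (inv : G -> G)
  (C : G -> Prop) (tau : G -> Z) :
  is_group mul one inv ->
  is_subgroup mul one inv C ->
  (forall g, tau g = 0 \/ Z.odd (tau g) = true) ->
  ordering_quasi_morphism mul one inv tau ->
  qm_kernel tau C ->
  positive_cone_rel (prodZ_mul mul) (prodZ_inv inv)
    (fun x : G * Z => tau (fst x) + 2 * snd x > 0)
    (fun x : G * Z => C (fst x) /\ snd x = 0).
Proof.
  intros _ _ tau_odd_or_zero Htau kernel_tau.
  pose proof (ordering_quasi_morphism_mul_ge Htau) as tau_mul_ge.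
  destruct Htau as [_ [tau_inv _]].
  apply (positive_cone_of_quasi_morphism _ (prodZ_mul mul) (prodZ_inv inv)
           _ (fun x => tau (fst x) + 2 * snd x)).
  - intros [g n]; cbn [prodZ_inv prodZ_mul fst snd]; rewrite tau_inv; lia.
  - intros [g n] [h m]; cbn [prodZ_mul fst snd].
    pose proof (tau_mul_ge g h); lia.
  - intros [g n]; cbn [fst snd]; rewrite (kernel_tau g); split.
    + lia.
    + apply odd_or_zero_add_double_eq0, tau_odd_or_zero.
Qed.
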